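(* A $3$-ranked liner $X$ is Boolean if and only if every parallelogram in $X$ is Boolean.
   Context: A liner is a set $X$ of points with a family of subsets called lines such that any two distinct points lie in a unique line and every line contains at least two points. For distinct $x,y$, $\overline{xy}$ is the line through them and $\overline{xx}:=\{x\}$. A set is flat if it contains $\overline{xy}$ for all its distinct points; $\overline A$ is the smallest flat containing $A$; the rank $\|A\|$ is the smallest cardinality of $B\subseteq X$ with $A\subseteq\overline B$. $X$ is $3$-ranked if any flats $A\subseteq B$ with $\|A\|=\|B\|\le3$ are equal. A flat $A$ is subparallel to a flat $B$ if $A\subseteq\overline{\{a\}\cup B}$ for every $a\in A$; $A\parallel B$ means each is subparallel to the other. A parallelogram is a quadruple $abcd\in X^4$ with $\overline{ab}\parallel\overline{cd}\ne\overline{ab}$ and $\overline{bc}\parallel\overline{ad}\ne\overline{bc}$; it is Boolean if $\overline{ac}\parallel\overline{bd}$. $X$ is Boolean if for every quadruple $abcd\in X^4$, $\overline{ab}\cap\overline{cd}=\varnothing=\overline{bc}\cap\overline{ad}$ implies $\overline{ac}\cap\overline{bd}=\varnothing$. *)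

From Stdlib Require Import List Arith.
Import ListNotations.

Definition set (X : Type) := X -> Prop.
Definition subset {X} (A B : set X) : Prop := forall x, A x -> B x.
Definition seteq {X} (A B : set X) : Prop := forall x, A x <-> B x.
Definition disjoint {X} (A B : set X) : Prop := forall x, ~ (A x /\ B x).

Record Liner := {
  pt :> Type;
  is_line : set pt -> Prop;
  line_exists : forall x y : pt, x <> y ->
      exists L, is_line L /\ L x /\ L y;
  line_unique : forall (x y : pt) L L', x <> y ->
      is_line L -> L x -> L y -> is_line L' -> L' x -> L' y -> seteq L L';
  line_two : forall L, is_line L -> exists x y : pt, x <> y /\ L x /\ L y
}.

Section LinerDefs.
Variable X : Liner.

Definition line_through (x y : X) : set X :=
  fun z => (x = y /\ z = x) \/
           (x <> y /\ exists L, is_line X L /\ L x /\ L y /\ L z).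

Definition flat (A : set X) : Prop :=
  forall x y, A x -> A y -> x <> y -> subset (line_through x y) A.

Definition closure (A : set X) : set X :=
  fun z => forall F, flat F -> subset A F -> F z.

Definition rank_le (A : set X) (n : nat) : Prop :=
  exists l : list X, length l <= n /\ subset A (closure (fun x => In x l)).

Definition rank_eq (A : set X) (n : nat) : Prop :=
  rank_le A n /\ (forall m, m < n -> ~ rank_le A m).

Definition three_ranked : Prop :=
  forall A B : set X, flat A -> flat B -> subset A B ->
    forall n, n <= 3 -> rank_eq A n -> rank_eq B n -> seteq A B.

Definition add_point (a : X) (B : set X) : set X := fun z => z = a \/ B z.

Definition subparallel (A B : set X) : Prop :=
  forall a, A a -> subset A (closure (add_point a B)).

Definition parallel (A B : set X) : Prop := subparallel A B /\ subparallel B A.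

Definition parallelogram (a b c d : X) : Prop :=
  parallel (line_through a b) (line_through c d) /\
  ~ seteq (line_through c d) (line_through a b) /\
  parallel (line_through b c) (line_through a d) /\
  ~ seteq (line_through b c) (line_through a d).

Definition boolean_parallelogram (a b c d : X) : Prop :=
  parallelogram a b c d /\ parallel (line_through a c) (line_through b d).

Definition boolean_liner : Prop :=
  forall a b c d : X,
    disjoint (line_through a b) (line_through c d) ->
    disjoint (line_through b c) (line_through a d) ->
    disjoint (line_through a c) (line_through b d).

End LinerDefs.

From Stdlib Require Import List Arith Lia Classical.
Import ListNotations.

(* In a 3-ranked liner a plane is spanned by any three of its non-collinear
   points, so two disjoint lines lying in a common plane are parallel: the
   plane through one line and a point of the other is the whole plane.  Both a
   parallelogram and a quadruple whose opposite sides are disjoint lie in the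
   plane of three of their vertices, and there "parallel and distinct" means
   the same as "disjoint" for the sides as well as for the diagonals. *)

Section LinerFacts.
Variable X : Liner.
Notation ln := (line_through X).

Lemma line_through_ends (x y : X) : ln x y x /\ ln x y y.
Proof.
  destruct (classic (x = y)) as [->|Hxy].
  - split; left; auto.
  - destruct (line_exists X x y Hxy) as [L [HL [Lx Ly]]].
    split; right; split; auto; exists L; auto.
Qed.

Lemma line_through_l (x y : X) : ln x y x.
Proof. apply line_through_ends. Qed.

Lemma line_through_r (x y : X) : ln x y y.
Proof. apply line_through_ends. Qed.

Lemma line_through_sym (x y z : X) : ln x y z -> ln y x z.
Proof.
  intros [[-> ->]|[Hxy [L [HL [Lx [Ly Lz]]]]]].
  - left; auto.
  - right; split; auto; exists L; auto.
Qed.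

Lemma line_through_refl (u z : X) : ln u u z -> z = u.
Proof. intros [[_ ->]|[Huu _]]; [auto|contradiction]. Qed.

Lemma line_through_line (x y : X) L : x <> y -> is_line X L -> L x -> L y ->
  forall z, ln x y z <-> L z.
Proof.
  intros Hxy HL Lx Ly z; split.
  - intros [[e _]|[_ [L' [HL' [L'x [L'y L'z]]]]]]; [contradiction|].
    exact (proj1 (line_unique X x y L' L Hxy HL' L'x L'y HL Lx Ly z) L'z).
  - intros Lz; right; split; auto; exists L; auto.
Qed.

Lemma line_through_collinear (u v a b c : X) : u <> v ->
  ln u v a -> ln u v b -> ln u v c -> a <> b -> ln a b c.
Proof.
  intros Huv Ha Hb Hc Hab.
  destruct (line_exists X u v Huv) as [L [HL [Lu Lv]]].
  rewrite (line_through_line u v L Huv HL Lu Lv) in Ha, Hb, Hc.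
  apply (line_through_line a b L Hab HL Ha Hb), Hc.
Qed.

Lemma line_through_swap (x y z : X) : x <> y -> x <> z -> ln x y z -> ln x z y.
Proof.
  intros; apply line_through_collinear with x y;
    auto using line_through_l, line_through_r.
Qed.

Lemma flat_line_through (u v : X) : flat X (ln u v).
Proof.
  intros x y Hx Hy Hxy z Hz. destruct (classic (u = v)) as [<-|Huv].
  - apply line_through_refl in Hx; apply line_through_refl in Hy; subst.
    contradiction.
  - apply line_through_collinear with x y; auto.
    + apply line_through_collinear with u v; auto using line_through_l.
    + apply line_through_collinear with u v; auto using line_through_r.
Qed.

Lemma flat_line_through_sub (F : set X) (x y : X) :
  flat X F -> F x -> F y -> subset (ln x y) F.
Proof.
  intros HF Hx Hy z Hz. destruct (classic (x = y)) as [<-|Hxy].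
  - apply line_through_refl in Hz; subst; auto.
  - exact (HF x y Hx Hy Hxy z Hz).
Qed.

Lemma disjoint_line_through_neq (a b c d : X) :
  disjoint (ln a b) (ln c d) -> a <> c /\ a <> d /\ b <> c /\ b <> d.
Proof.
  intros D; repeat split; intros e; subst;
    [apply (D c)|apply (D d)|apply (D c)|apply (D d)];
    auto using line_through_l, line_through_r.
Qed.

Lemma closure_incl (A : set X) : subset A (closure X A).
Proof. intros x Hx F HF HAF; auto. Qed.

Lemma flat_closure (A : set X) : flat X (closure X A).
Proof.
  intros x y Hx Hy Hxy z Hz F HF HAF.
  exact (HF x y (Hx F HF HAF) (Hy F HF HAF) Hxy z Hz).
Qed.

Lemma closure_min (A F : set X) :
  flat X F -> subset A F -> subset (closure X A) F.
Proof. intros HF HAF x Hx; apply Hx; auto. Qed.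

Lemma closure_mono (A B : set X) :
  subset A B -> subset (closure X A) (closure X B).
Proof.
  intros HAB; apply closure_min; [apply flat_closure|].
  intros x Hx; apply closure_incl, HAB, Hx.
Qed.

Lemma closure_add_point_line (w z : X) :
  subset (closure X (add_point X w (ln z z))) (ln w z).
Proof.
  apply closure_min; [apply flat_line_through|].
  intros y [->|Hy]; [apply line_through_l|].
  apply line_through_refl in Hy; subst; apply line_through_r.
Qed.

Lemma rank_le2_sub_line (A : set X) (a : X) :
  A a -> rank_le X A 2 -> exists u v, subset A (ln u v).
Proof.
  intros Aa [l [Hl HA]].
  assert (Hl' : exists u v, subset (fun x => In x l) (ln u v)).
  { destruct l as [|u [|v [|t l]]]; simpl in Hl.
    - exists a, a; intros x [].
    - exists u, u; intros x [<-|[]]; apply line_through_l.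
    - exists u, v; intros x [<-|[<-|[]]]; auto using line_through_l, line_through_r.
    - lia. }
  destruct Hl' as [u [v Huv]]; exists u, v.
  intros x Hx; apply (closure_min _ _ (flat_line_through u v) Huv), HA, Hx.
Qed.

Definition noncollinear (a b c : X) : Prop := a <> b /\ ~ ln a b c.

Definition plane (a b c : X) : set X := closure X (fun x => In x [a; b; c]).

Lemma plane_vertices (a b c : X) : plane a b c a /\ plane a b c b /\ plane a b c c.
Proof. repeat split; apply closure_incl; simpl; auto. Qed.

Lemma plane_line_through (a b c x y : X) :
  plane a b c x -> plane a b c y -> subset (ln x y) (plane a b c).
Proof. apply flat_line_through_sub, flat_closure. Qed.

Lemma plane_rank (a b c : X) : noncollinear a b c -> rank_eq X (plane a b c) 3.
Proof.
  intros [Hab Hc]; split.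
  - exists [a; b; c]; split; [simpl; lia|intros x Hx; exact Hx].
  - intros m Hm Hrk.
    destruct (plane_vertices a b c) as [Pa [Pb Pc]].
    destruct (rank_le2_sub_line (plane a b c) a Pa) as [u [v Huv]].
    { destruct Hrk as [l [Hl HA]]; exists l; split; [lia|auto]. }
    destruct (classic (u = v)) as [<-|Huv'].
    + apply Hab; rewrite (line_through_refl u a), (line_through_refl u b); auto.
    + apply Hc, line_through_collinear with u v; auto.
Qed.

Lemma subparallel_in_plane (a b c d : X) :
  subparallel X (ln c d) (ln a b) -> plane a b c d.
Proof.
  intros Hsub.
  destruct (plane_vertices a b c) as [Pa [Pb Pc]].
  apply (closure_min (add_point X c (ln a b))).
  - apply flat_closure.
  - intros w [->|Hw]; [exact Pc|exact (plane_line_through a b c a b Pa Pb w Hw)].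
  - apply (Hsub c (line_through_l c d)), line_through_r.
Qed.

Lemma not_subparallel_point (x y z : X) :
  x <> y -> ~ subparallel X (ln x y) (ln z z).
Proof.
  intros Hxy Hsub.
  assert (Hy : ln x z y)
    by apply closure_add_point_line, (Hsub x (line_through_l x y)), line_through_r.
  destruct (classic (x = z)) as [<-|Hxz].
  - apply Hxy; symmetry; apply line_through_refl, Hy.
  - assert (Hz : ln x y z) by (apply line_through_swap; auto).
    apply Hxz, line_through_refl, closure_add_point_line, (Hsub z Hz),
      line_through_l.
Qed.

Lemma parallel_degenerate (a b c d : X) :
  parallel X (ln a b) (ln c d) -> (a = b <-> c = d).
Proof.
  intros [H1 H2]; split; intros <-.
  - apply NNPP; intros Hcd; exact (not_subparallel_point c d a Hcd H2).
  - apply NNPP; intros Hab; exact (not_subparallel_point a b c Hab H1).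
Qed.

Lemma parallel_disjoint (a b c d : X) : parallel X (ln a b) (ln c d) ->
  ~ seteq (ln c d) (ln a b) -> disjoint (ln a b) (ln c d).
Proof.
  intros [H1 H2] Hne p [Hp1 Hp2]; apply Hne; intros z; split; intros Hz.
  - apply (closure_min (add_point X p (ln a b))), (H2 p Hp2); auto.
    + apply flat_line_through.
    + intros w [->|Hw]; auto.
  - apply (closure_min (add_point X p (ln c d))), (H1 p Hp1); auto.
    + apply flat_line_through.
    + intros w [->|Hw]; auto.
Qed.

Lemma parallelogram_neq (a b c d : X) : parallelogram X a b c d ->
  a <> b /\ b <> c /\ c <> d /\ a <> d.
Proof.
  intros [P1 [N1 [P2 N2]]].
  assert (Hab : a <> b).
  { intros <-; assert (Hcd : c = d) by (apply (parallel_degenerate _ _ _ _ P1); auto).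
    subst d; apply N2; intros z; tauto. }
  assert (Hbc : b <> c).
  { intros <-; assert (Had : a = d) by (apply (parallel_degenerate _ _ _ _ P2); auto).
    subst d; apply N1; intros z; split; apply line_through_sym. }
  repeat split; auto.
  - intros Hcd; apply Hab, (parallel_degenerate _ _ _ _ P1), Hcd.
  - intros Had; apply Hbc, (parallel_degenerate _ _ _ _ P2), Had.
Qed.

Section ThreeRanked.
Hypothesis three_ranked_X : three_ranked X.

Lemma plane_sub_of_noncollinear (a b c p q r : X) :
  noncollinear p q r -> noncollinear a b c ->
  plane a b c p -> plane a b c q -> plane a b c r ->
  subset (plane a b c) (plane p q r).
Proof.
  intros Npqr Nabc Pp Pq Pr.
  assert (Hsub : subset (plane p q r) (plane a b c)).
  { apply closure_min; [apply flat_closure|]. intros x [<-|[<-|[<-|[]]]]; auto. }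
  intros x Hx.
  apply (three_ranked_X _ _ (flat_closure _) (flat_closure _) Hsub 3 (le_n 3)
           (plane_rank _ _ _ Npqr) (plane_rank _ _ _ Nabc) x), Hx.
Qed.

Lemma coplanar_disjoint_subparallel (a b c u v s t : X) :
  noncollinear a b c -> s <> t ->
  subset (ln u v) (plane a b c) -> subset (ln s t) (plane a b c) ->
  disjoint (ln u v) (ln s t) -> subparallel X (ln u v) (ln s t).
Proof.
  intros Nabc Hst Suv Sst D x Hx y Hy.
  assert (Nstx : noncollinear s t x) by (split; auto; intros Hx'; apply (D x); auto).
  apply (closure_mono (fun y => In y [s; t; x])).
  - intros z [<-|[<-|[<-|[]]]]; unfold add_point;
      auto using line_through_l, line_through_r.
  - apply (plane_sub_of_noncollinear a b c s t x); auto using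
      line_through_l, line_through_r.
Qed.

Lemma coplanar_disjoint_parallel (a b c u v s t : X) :
  noncollinear a b c -> u <> v -> s <> t ->
  subset (ln u v) (plane a b c) -> subset (ln s t) (plane a b c) ->
  disjoint (ln u v) (ln s t) -> parallel X (ln u v) (ln s t).
Proof.
  intros Nabc Huv Hst Suv Sst D; split.
  - apply (coplanar_disjoint_subparallel a b c); auto.
  - apply (coplanar_disjoint_subparallel a b c); auto.
    intros z [Hz1 Hz2]; apply (D z); auto.
Qed.

Lemma disjoint_sides_parallelogram (a b c d : X) : plane a b c d ->
  disjoint (ln a b) (ln c d) -> disjoint (ln b c) (ln a d) ->
  parallelogram X a b c d.
Proof.
  intros Pd D1 D2.
  destruct (plane_vertices a b c) as [Pa [Pb Pc]].
  destruct (disjoint_line_through_neq _ _ _ _ D1) as [_ [Had [Hbc _]]].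
  destruct (disjoint_line_through_neq _ _ _ _ D2) as [Hba [_ [_ Hcd]]].
  assert (Nabc : noncollinear a b c).
  { split; auto. intros Hc; apply (D1 c); split; [exact Hc|apply line_through_l]. }
  split; [|split; [|split]].
  - apply (coplanar_disjoint_parallel a b c); auto using plane_line_through.
  - intros E; apply (D1 c); split; [apply E|]; apply line_through_l.
  - apply (coplanar_disjoint_parallel a b c); auto using plane_line_through.
  - intros E; apply (D2 b); split; [|apply E]; apply line_through_l.
Qed.

Lemma parallelogram_boolean_of_boolean_liner (a b c d : X) :
  boolean_liner X -> parallelogram X a b c d -> boolean_parallelogram X a b c d.
Proof.
  intros HB Hpg; split; [exact Hpg|].
  destruct (parallelogram_neq a b c d Hpg) as [Hab [Hbc [Hcd Had]]].
  destruct Hpg as [P1 [N1 [P2 N2]]].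
  assert (D1 : disjoint (ln a b) (ln c d)) by exact (parallel_disjoint _ _ _ _ P1 N1).
  assert (D2 : disjoint (ln b c) (ln a d)).
  { apply (parallel_disjoint _ _ _ _ P2); intros E; apply N2; intros z.
    specialize (E z); tauto. }
  destruct (disjoint_line_through_neq _ _ _ _ D1) as [Hac _].
  destruct (disjoint_line_through_neq _ _ _ _ D2) as [_ [Hbd _]].
  destruct (plane_vertices a b c) as [Pa [Pb Pc]].
  assert (Pd : plane a b c d) by exact (subparallel_in_plane a b c d (proj2 P1)).
  apply (coplanar_disjoint_parallel a b c); auto using plane_line_through.
  split; auto; intros Hc; apply (D1 c); auto using line_through_l.
Qed.

Lemma boolean_liner_of_parallelograms :
  (forall a b c d : X, parallelogram X a b c d -> boolean_parallelogram X a b c d) ->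
  boolean_liner X.
Proof.
  intros HP a b c d D1 D2 p [Hp1 Hp2].
  destruct (disjoint_line_through_neq _ _ _ _ D1) as [Hac _].
  destruct (disjoint_line_through_neq _ _ _ _ D2) as [Hba [Hbd _]].
  assert (NC : ~ ln a b c)
    by (intros Hc; apply (D1 c); split; [auto|apply line_through_l]).
  assert (Hbp : b <> p) by (intros <-; apply NC, line_through_swap; auto).
  destruct (plane_vertices a b c) as [Pa [Pb Pc]].
  assert (Pp : plane a b c p) by exact (plane_line_through a b c a c Pa Pc p Hp1).
  assert (Pd : plane a b c d)
    by (apply (plane_line_through a b c b p Pb Pp), line_through_swap; auto).
  destruct (HP a b c d (disjoint_sides_parallelogram a b c d Pd D1 D2)) as [_ Pac].
  apply (parallel_disjoint _ _ _ _ Pac) with p; auto.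
  intros E; apply NC, line_through_swap, E, line_through_l; auto.
Qed.

End ThreeRanked.
End LinerFacts.

Theorem theorem6p8p8 (X : Liner) :
  three_ranked X ->
  (boolean_liner X <->
   forall a b c d : X, parallelogram X a b c d -> boolean_parallelogram X a b c d).
Proof.
  intros TR; split.
  - intros HB a b c d; exact (parallelogram_boolean_of_boolean_liner X TR a b c d HB).
  - exact (boolean_liner_of_parallelograms X TR).
Qed.
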